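(* Let $(K\subseteq L,v)$ be a valued field extension. Suppose that every $y\in L$ can be written as $y=x+a$ with $a\in K$ and $x\in L$ such that $|v(x)|>\Gamma_K$. Then the extension $L|K$ is $vs$-defectless.
   Context: $\Gamma_K$ is the value group of $K$ inside $\Gamma_L$; $|v(x)|>\Gamma_K$ means $v(x)>\gamma$ for all $\gamma\in\Gamma_K$ or $v(x)<\gamma$ for all $\gamma\in\Gamma_K$ (with $v(0)=\infty>\Gamma_K$). A set $\{a_1,\dots,a_n\}\subseteq L$ is $K$-valuation independent if $v(\sum_i c_ia_i)=\min_i v(c_ia_i)$ for all $c_i\in K$; $L|K$ is $vs$-defectless if every finitely generated $K$-vector subspace of $L$ is spanned by a $K$-valuation independent set. *)

From mathcomp Require Import all_boot all_order all_algebra.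
Set Implicit Arguments. Unset Strict Implicit. Unset Printing Implicit Defensive.
Import GRing.Theory.
Local Open Scope ring_scope.

Definition ordered_abelian_group (G : zmodType) (le : rel G) : Prop :=
  [/\ reflexive le, antisymmetric le, transitive le, total le
    & forall x y z : G, le x y -> le (x + z) (y + z)].

(* Γ ∪ {∞}, with None = ∞. *)
Definition oadd (G : zmodType) (a b : option G) : option G :=
  match a, b with Some x, Some y => Some (x + y) | _, _ => None end.

Definition ole (G : zmodType) (le : rel G) (a b : option G) : bool :=
  match a, b with
  | _, None => true
  | None, Some _ => false
  | Some x, Some y => le x y
  end.

Definition olt (G : zmodType) (le : rel G) (a b : option G) : bool :=
  ole le a b && (a != b).

Definition omin (G : zmodType) (le : rel G) (a b : option G) : option G :=
  if ole le a b then a else b.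

Definition ominseq (G : zmodType) (le : rel G) (s : seq (option G)) : option G :=
  foldr (omin le) None s.

Definition is_valuation (L : fieldType) (G : zmodType) (le : rel G)
  (v : L -> option G) : Prop :=
  [/\ forall x, v x = None <-> x = 0,
      forall x y, v (x * y) = oadd (v x) (v y)
    & forall x y, ole le (omin le (v x) (v y)) (v (x + y))].

Section ValuedExt.
Variables (K L : fieldType) (emb : {rmorphism K -> L})
          (G : zmodType) (le : rel G) (v : L -> option G).

Definition in_GammaK (g : G) : Prop :=
  exists a : K, a != 0 /\ v (emb a) = Some g.

Definition abs_v_gt_GammaK (x : L) : Prop :=
  (forall g, in_GammaK g -> olt le (Some g) (v x)) \/
  (forall g, in_GammaK g -> olt le (v x) (Some g)).

Definition Klincomb (b : seq L) (c : nat -> K) : L :=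
  \sum_(i < size b) emb (c i) * b`_i.

Definition in_Kspan (b : seq L) (y : L) : Prop :=
  exists c : nat -> K, y = Klincomb b c.

Definition Kval_independent (b : seq L) : Prop :=
  uniq b /\
  forall c : nat -> K,
    v (Klincomb b c) =
    ominseq le [seq v (emb (c i) * b`_i) | i <- iota 0 (size b)].

Definition vs_defectless : Prop :=
  forall s : seq L, exists b : seq L,
    Kval_independent b /\ (forall y, in_Kspan s y <-> in_Kspan b y).

End ValuedExt.

(* A family of nonzero elements of L whose values lie in pairwise distinct
   cosets of Γ_K is K-valuation independent: the nonzero terms of a K-linear
   combination of it have pairwise distinct values, and for summands of
   distinct values the ultrametric inequality is an equality.
   Every finite family spans the same K-space as such a family, built by
   adding generators one at a time.  If a new element y has v y = v(a b) for a
   member b of the family and a in K^×, the hypothesis applied to y/(ab) gives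
   y = a' a b + z with v z above the whole coset v b + Γ_K (the other case of
   the hypothesis would give v(y/(ab)) < 0).  Correcting y against the other
   members only increases its value, so after these corrections y is either 0
   or has its value in a new coset. *)

From mathcomp Require Import all_boot all_order all_algebra ring.
From Stdlib Require Import Classical.
Set Implicit Arguments. Unset Strict Implicit. Unset Printing Implicit Defensive.
Import GRing.Theory.
Local Open Scope ring_scope.

Section OptionOrder.
Variables (G : zmodType) (le : rel G).
Hypothesis hG : ordered_abelian_group le.

Let le_refl : reflexive le. Proof. by case: hG. Qed.
Let le_anti : antisymmetric le. Proof. by case: hG. Qed.
Let le_trans : transitive le. Proof. by case: hG. Qed.
Let le_total : total le. Proof. by case: hG. Qed.
Let lerD2r x y z : le x y -> le (x + z) (y + z).
Proof. by case: hG => _ _ _ _; apply. Qed.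

Lemma double_eq0 (x : G) : x + x = 0 -> x = 0.
Proof.
move=> xx0; apply: le_anti.
by case/orP: (le_total x 0) => h; have := lerD2r x h; rewrite xx0 add0r => ->; rewrite h.
Qed.

Lemma ole_refl a : ole le a a.
Proof. by case: a => //= x; apply: le_refl. Qed.

Lemma ole_anti a b : ole le a b -> ole le b a -> a = b.
Proof. by case: a => [x|]; case: b => [y|] //= h1 h2; rewrite (@le_anti x y) ?h1. Qed.

Lemma ole_trans a b c : ole le a b -> ole le b c -> ole le a c.
Proof. by case: a => [x|]; case: b => [y|]; case: c => [z|] //=; apply: le_trans. Qed.

Lemma ole_total a b : ole le a b || ole le b a.
Proof. by case: a; case: b => //= x y; apply: le_total. Qed.

Lemma oltW a b : olt le a b -> ole le a b.
Proof. by case/andP. Qed.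

Lemma oltxx a : olt le a a = false.
Proof. by rewrite /olt eqxx andbF. Qed.

Lemma olt_ole_trans a b c : olt le a b -> ole le b c -> olt le a c.
Proof.
case/andP=> hab neq_ab hbc; rewrite /olt (ole_trans hab hbc).
by apply: contra_neq neq_ab => eq_ac; apply: ole_anti => //; rewrite eq_ac.
Qed.

Lemma olt_oaddr q a b :
  olt le a b -> olt le (oadd a (Some q)) (oadd b (Some q)).
Proof.
case: a => [x|]; case: b => [y|] //=; rewrite /olt /= => /andP[hxy neq_xy].
by rewrite lerD2r //; apply: contra neq_xy => /eqP[/addIr ->].
Qed.

Lemma omin_idl a b : ole le a b -> omin le a b = a.
Proof. by rewrite /omin => ->. Qed.

Lemma omin_idr a b : ole le b a -> omin le a b = b.
Proof. by rewrite /omin; case: ifP => // hab hba; apply: ole_anti. Qed.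

Lemma omin_comm a b : omin le a b = omin le b a.
Proof.
by case/orP: (ole_total a b) => h; rewrite (omin_idl h) (omin_idr h).
Qed.

Lemma ominseq_mem s : ominseq le s != None -> ominseq le s \in s.
Proof.
elim: s => //= a s IH; rewrite /omin; case: ifP => _; first by rewrite mem_head.
by move/IH; rewrite in_cons orbC => ->.
Qed.

End OptionOrder.

Section Valuation.
Variables (L : fieldType) (G : zmodType) (le : rel G) (v : L -> option G).
Hypotheses (hG : ordered_abelian_group le) (hv : is_valuation le v).

Let vNone x : v x = None <-> x = 0. Proof. by case: hv. Qed.
Let vM x y : v (x * y) = oadd (v x) (v y). Proof. by case: hv. Qed.
Let vD x y : ole le (omin le (v x) (v y)) (v (x + y)). Proof. by case: hv. Qed.

Lemma v0 : v 0 = None.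
Proof. exact/vNone. Qed.

Lemma v_neq0 x : x != 0 -> exists g, v x = Some g.
Proof.
move=> /eqP x0; case vx: (v x) => [g|]; first by exists g.
by move/vNone: vx.
Qed.

Lemma v1 : v 1 = Some 0.
Proof.
have [g vg] := v_neq0 (oner_neq0 L).
have := vM 1 1; rewrite mulr1 vg => -[gg].
by congr Some; apply: (@addrI _ g); rewrite addr0 -gg.
Qed.

Lemma vN x : v (- x) = v x.
Proof.
have [g vg] : exists g, v (-1) = Some g by apply: v_neq0; rewrite oppr_eq0 oner_eq0.
have vN1 : v (-1) = Some 0.
  by have := vM (-1) (-1); rewrite mulrNN mulr1 v1 vg => -[/esym/(double_eq0 hG) <-].
by rewrite -mulN1r vM vN1; case: (v x) => //= y; rewrite add0r.
Qed.

Lemma vV x g : v x = Some g -> v x^-1 = Some (- g).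
Proof.
move=> vx; have x0 : x != 0 by apply/eqP => /vNone; rewrite vx.
have [h vxV] := v_neq0 (invr_neq0 x0).
have := vM x x^-1; rewrite mulfV // v1 vx vxV => -[/eqP].
by rewrite eq_sym addrC addr_eq0 => /eqP ->.
Qed.

Lemma v_addE x y : v x != v y -> v (x + y) = omin le (v x) (v y).
Proof.
wlog hxy : x y / ole le (v x) (v y) => [hw neq_xy|].
  case/orP: (ole_total hG (v x) (v y)) => h; first exact: hw.
  by rewrite addrC (omin_comm hG) hw // eq_sym.
move=> neq_xy; rewrite omin_idl //; apply: (ole_anti hG); last first.
  by rewrite -{1}(omin_idl hxy); apply: vD.
have := vD (x + y) (- y); rewrite addrK vN.
case/orP: (ole_total hG (v (x + y)) (v y)) => h; first by rewrite omin_idl.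
rewrite (omin_idr hG) // => hyx.
by case/eqP: neq_xy; apply: (ole_anti hG).
Qed.

End Valuation.

Lemma map_iota0S (T : Type) (f : nat -> T) n :
  [seq f i | i <- iota 0 n.+1] = f 0%N :: [seq f i.+1 | i <- iota 0 n].
Proof. by rewrite /= -[1%N]addn0 iotaDl -map_comp. Qed.

Section Span.
Variables (K L : fieldType) (emb : {rmorphism K -> L}).

Lemma Klincomb_cons x b c :
  Klincomb emb (x :: b) c = emb (c 0%N) * x + Klincomb emb b (fun i => c i.+1).
Proof. by rewrite /Klincomb big_ord_recl. Qed.

Lemma in_Kspan0 b : in_Kspan emb b 0.
Proof.
by exists (fun=> 0); rewrite /Klincomb big1 // => i _; rewrite rmorph0 mul0r.
Qed.

Lemma in_KspanD b y1 y2 :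
  in_Kspan emb b y1 -> in_Kspan emb b y2 -> in_Kspan emb b (y1 + y2).
Proof.
move=> [c1 ->] [c2 ->]; exists (fun i => c1 i + c2 i).
by rewrite /Klincomb -big_split; apply: eq_bigr => i _; rewrite rmorphD mulrDl.
Qed.

Lemma in_KspanZ b a y : in_Kspan emb b y -> in_Kspan emb b (emb a * y).
Proof.
move=> [c ->]; exists (fun i => a * c i).
by rewrite /Klincomb mulr_sumr; apply: eq_bigr => i _; rewrite rmorphM mulrA.
Qed.

Lemma in_Kspan_consP x b y :
  in_Kspan emb (x :: b) y <-> exists a, in_Kspan emb b (y - emb a * x).
Proof.
split=> [[c ->]|[a [c yE]]].
  by exists (c 0%N), (fun i => c i.+1); rewrite Klincomb_cons; ring.
exists (fun i => if i is j.+1 then c j else a).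
by rewrite Klincomb_cons -yE addrC subrK.
Qed.

Lemma eq_in_Kspan_cons x s b :
  (forall y, in_Kspan emb s y <-> in_Kspan emb b y) ->
  forall y, in_Kspan emb (x :: s) y <-> in_Kspan emb (x :: b) y.
Proof. by move=> sb y; rewrite !in_Kspan_consP; split=> -[a /sb]; exists a. Qed.

Lemma in_Kspan_consB x b w :
  in_Kspan emb b w ->
  forall y, in_Kspan emb (x :: b) y <-> in_Kspan emb (x - w :: b) y.
Proof.
move=> bw y; rewrite !in_Kspan_consP; split=> -[a ya]; exists a.
  have -> : y - emb a * (x - w) = y - emb a * x + emb a * w by ring.
  by apply: in_KspanD => //; apply: in_KspanZ.
have -> : y - emb a * x = y - emb a * (x - w) + emb (- a) * w by rewrite rmorphN; ring.
by apply: in_KspanD => //; apply: in_KspanZ.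
Qed.

Lemma in_Kspan_cons0 b y : in_Kspan emb (0 :: b) y <-> in_Kspan emb b y.
Proof.
rewrite in_Kspan_consP; split=> [[a]|yb]; last exists 0.
all: by rewrite mulr0 subr0.
Qed.

End Span.

Section Cosets.
Variables (K L : fieldType) (emb : {rmorphism K -> L})
          (G : zmodType) (le : rel G) (v : L -> option G).
Hypotheses (hG : ordered_abelian_group le) (hv : is_valuation le v).

Let vNone x : v x = None <-> x = 0. Proof. by case: hv. Qed.
Let vM x y : v (x * y) = oadd (v x) (v y). Proof. by case: hv. Qed.

(* [v y] lies in the coset [v u + Γ_K] *)
Definition same_coset (u y : L) : Prop :=
  exists2 a : K, a != 0 & v y = v (emb a * u).

Definition coset_apart (b : seq L) (y : L) : Prop :=
  forall u, u \in b -> ~ same_coset u y.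

Fixpoint distinct_cosets (b : seq L) : Prop :=
  if b is x :: b' then [/\ x != 0, coset_apart b' x & distinct_cosets b']
  else True.

Definition above_coset (x z : L) : Prop :=
  forall k : K, k != 0 -> olt le (v (emb k * x)) (v z).

Lemma in_GammaK0 : in_GammaK emb v 0.
Proof. by exists 1; rewrite oner_neq0 rmorph1 (v1 hv). Qed.

Lemma in_GammaK_emb k : k != 0 -> exists2 g, in_GammaK emb v g & v (emb k) = Some g.
Proof.
move=> k0; have [g vk] : exists g, v (emb k) = Some g.
  by apply: (v_neq0 hv); rewrite fmorph_eq0.
by exists g => //; exists k.
Qed.

Lemma same_coset_scale a k u y :
  v (emb a * y) = v (emb k * u) -> v (emb a * y) != None -> same_coset u y.
Proof.
have emb_neq0 c z : v (emb c * z) != None -> emb c != 0.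
  by apply: contraNneq => ->; rewrite mul0r (v0 hv).
move=> e vay; have a0 := emb_neq0 _ _ vay.
have k0 : emb k != 0 by apply: (emb_neq0 _ u); rewrite -e.
exists (a^-1 * k); first by rewrite mulf_neq0 ?invr_eq0 -?(fmorph_eq0 emb).
by rewrite rmorphM fmorphV -mulrA vM -e -vM mulrA mulVf ?mul1r.
Qed.

Lemma distinct_cosets_uniq b : distinct_cosets b -> uniq b.
Proof.
elim: b => //= x b IH [_ xb bd]; rewrite IH // andbT.
apply/negP => xb_x; apply: (xb x xb_x).
by exists 1; rewrite ?oner_neq0 // rmorph1 mul1r.
Qed.

Lemma distinct_cosets_indep b : distinct_cosets b -> forall c,
  v (Klincomb emb b c) =
  ominseq le [seq v (emb (c i) * b`_i) | i <- iota 0 (size b)].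
Proof.
elim: b => [_ c|x b IH [_ xb bd] c]; first by rewrite /Klincomb big_ord0 (v0 hv).
rewrite Klincomb_cons map_iota0S /= -IH //.
set S := Klincomb emb b _; set a := emb (c 0%N) * x.
have [vS_eq|/(v_addE hG hv)//] := eqVneq (v a) (v S).
case vS: (v S) => [p|]; last first.
  have [-> ->] : a = 0 /\ S = 0 by split; apply/vNone; rewrite // vS_eq.
  by rewrite addr0 (v0 hv).
have := @ominseq_mem _ le [seq v (emb (c i.+1) * b`_i) | i <- iota 0 (size b)].
rewrite -IH // vS => /(_ isT) /mapP[i]; rewrite mem_iota add0n => /andP[_ ltib] vSi.
exfalso; apply: (xb (b`_i) (mem_nth 0 ltib)).
by apply: (@same_coset_scale (c 0%N) (c i.+1)); rewrite -/a vS_eq vS.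
Qed.

Lemma above_coset_not_same x z : above_coset x z -> ~ same_coset x z.
Proof. by move=> xz [k k0 vz]; have := xz k k0; rewrite vz oltxx. Qed.

Lemma above_coset_ole x z z' :
  above_coset x z -> ole le (v z) (v z') -> above_coset x z'.
Proof. by move=> xz le_zz' k k0; exact: (olt_ole_trans hG (xz k k0) le_zz'). Qed.

Lemma same_coset_ole_above x y z :
  same_coset x y -> above_coset x z -> ole le (v y) (v z).
Proof. by move=> [k k0 ->] xz; exact: (oltW (xz k k0)). Qed.

Hypothesis decompose : forall y : L, exists (a : K) (x : L),
  y = x + emb a /\ abs_v_gt_GammaK emb le v x.

Lemma same_coset_approx x y : x != 0 -> same_coset x y ->
  exists a1 : K, above_coset x (y - emb a1 * x).
Proof.
move=> x0 [a a0 vy]; set u := emb a * x.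
have u0 : u != 0 by rewrite mulf_neq0 ?fmorph_eq0.
have [q vu] := v_neq0 hv u0.
have [a1 [t [yuE t_abs]]] := decompose (y / u).
have t_above : forall g, in_GammaK emb v g -> olt le (Some g) (v t).
  case: t_abs => [//|t_below]; exfalso.
  have vyu : v (y / u) = Some 0 by rewrite vM vy -/u vu (vV hv vu) /= subrr.
  have t_neg := t_below 0 in_GammaK0.
  have /andP[le_t_a1 neq_t_a1] : olt le (v t) (v (emb a1)).
    have [->|a1_0] := eqVneq a1 0.
      by rewrite rmorph0 (v0 hv); move: t_neg; case: (v t).
    by have [g Gg ->] := in_GammaK_emb a1_0; apply: t_below.
  by move: t_neg; rewrite -vyu yuE (v_addE hG hv neq_t_a1) omin_idl // oltxx.
exists (a1 * a) => k k0.
have -> : y - emb (a1 * a) * x = t * u by rewrite -[y](divfK u0) yuE rmorphM /u; ring.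
have -> : emb k * x = emb (k / a) * u by rewrite /u mulrA -rmorphM divfK.
have [g Gg vka] := in_GammaK_emb (mulf_neq0 k0 (invr_neq0 a0)).
by rewrite (vM (emb _)) (vM t) vka vu; exact: (olt_oaddr hG _ (t_above g Gg)).
Qed.

Lemma coset_reduce b : distinct_cosets b -> forall y,
  exists2 w, in_Kspan emb b w & ole le (v y) (v (y - w)) /\ coset_apart b (y - w).
Proof.
elim: b => [_ y|x b IH [x0 _ bd] y].
  by exists 0; [exact: in_Kspan0 | rewrite subr0; split=> //; apply: ole_refl].
have [w1 bw1 [le_y_z1 apart_z1]] := IH bd y.
have [sc|nsc] := classic (same_coset x (y - w1)); last first.
  exists w1; first by apply/in_Kspan_consP; exists 0; rewrite rmorph0 mul0r subr0.
  by split=> // u; rewrite in_cons => /predU1P[->|/apart_z1].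
have [a1 above_z2] := same_coset_approx x0 sc.
have [w2 bw2 [le_z2_z3 apart_z3]] := IH bd (y - w1 - emb a1 * x).
exists (w1 + emb a1 * x + w2).
  apply/in_Kspan_consP; exists a1.
  have -> : w1 + emb a1 * x + w2 - emb a1 * x = w1 + w2 by ring.
  exact: in_KspanD.
have -> : y - (w1 + emb a1 * x + w2) = y - w1 - emb a1 * x - w2 by ring.
split.
  have le_z1_z2 := same_coset_ole_above sc above_z2.
  exact: (ole_trans hG le_y_z1 (ole_trans hG le_z1_z2 le_z2_z3)).
move=> u; rewrite in_cons => /predU1P[->|/apart_z3//].
exact/above_coset_not_same/(above_coset_ole above_z2 le_z2_z3).
Qed.

Lemma distinct_cosets_span s : exists2 b, distinct_cosets b &
  forall y, in_Kspan emb s y <-> in_Kspan emb b y.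
Proof.
elim: s => [|y s [b bd sb]]; first by exists [::].
have [w bw [_ apart]] := coset_reduce bd y.
have span_yw t : in_Kspan emb (y :: s) t <-> in_Kspan emb (y - w :: b) t.
  exact: iff_trans (eq_in_Kspan_cons y sb t) (in_Kspan_consB y bw t).
have [yw0|yw_neq0] := eqVneq (y - w) 0; last by exists (y - w :: b).
exists b => // t; apply: iff_trans (span_yw t) _.
by rewrite yw0; apply: in_Kspan_cons0.
Qed.

End Cosets.

Theorem lemma5p12 (K L : fieldType) (emb : {rmorphism K -> L})
  (G : zmodType) (le : rel G) (v : L -> option G) :
  ordered_abelian_group le ->
  is_valuation le v ->
  (forall y : L, exists (a : K) (x : L),
      y = x + emb a /\ abs_v_gt_GammaK emb le v x) ->
  vs_defectless emb le v.
Proof.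
move=> hG hv decompose s.
have [b bd sb] := distinct_cosets_span hG hv decompose s.
exists b; split=> //; split; first exact: distinct_cosets_uniq bd.
exact: distinct_cosets_indep.
Qed.
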